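(* Let $G = (V,E)$ be an $n$-vertex graph. Then there exists a set $A \subseteq V$ such that $G[A]$ is $\frac{n}{5\alpha(G)}$-connected.
   Context: $\alpha(G)$ denotes the independence number of $G$. A graph is $k$-connected if it has more than $k$ vertices and remains connected after deleting any fewer than $k$ vertices. *)

From mathcomp Require Import all_boot all_order all_algebra.
Set Implicit Arguments. Unset Strict Implicit. Unset Printing Implicit Defensive.
Import Order.TTheory GRing.Theory Num.Theory.

Definition simple_graph (T : finType) (e : rel T) : Prop :=
  symmetric e /\ irreflexive e.

Definition independent (T : finType) (e : rel T) (I : {set T}) : bool :=
  [forall x in I, forall y in I, ~~ e x y].

Definition alpha (T : finType) (e : rel T) : nat :=
  \max_(I : {set T} | independent e I) #|I|.

Definition connected_on (T : finType) (e : rel T) (B : {set T}) : Prop :=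
  forall x y, x \in B -> y \in B ->
    connect [rel u v | [&& e u v, u \in B & v \in B]] x y.

Definition k_connected_on (T : finType) (e : rel T) (A : {set T}) (k : rat) : Prop :=
  (k < (#|A|%:R : rat))%R /\
  forall S : {set T}, S \subset A -> ((#|S|%:R : rat) < k)%R ->
    connected_on e (A :\: S).

From mathcomp Require Import all_boot all_order all_algebra zify.
Import Order.TTheory GRing.Theory Num.Theory.

Set Implicit Arguments.
Unset Strict Implicit.
Unset Printing Implicit Defensive.

(* Let a = alpha(G) and c = floor((n - 1) / (5a)), so that c + 1 >= n / (5a).
   If a >= n a single vertex will do.  Otherwise Turan's theorem for the
   complement (any a + 1 vertices span an edge) gives a |E| >= n (n - a) / 2,
   which exceeds 2 a c (n - c).  Mader's argument then applies: a minimal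
   vertex set H with |H| >= 2c and more than 2c (|H| - c) edges has minimum
   degree > 2c, and a separator S of G[H] with |S| <= c would split H into two
   proper parts, each containing a closed neighbourhood and hence sparse, whose
   edge bounds add up to at most 2c (|H| - c).  So G[H] is (c + 1)-connected
   and |H| >= 2c + 2. *)

Lemma card_dep_pairs (T1 T2 : finType) (P : {set T1}) (f : T1 -> {set T2}) :
  #|[set p : T1 * T2 | (p.1 \in P) && (p.2 \in f p.1)]| = \sum_(i in P) #|f i|.
Proof.
rewrite -sum1_card.
rewrite (eq_bigl (fun p : T1 * T2 => (p.1 \in P) && (p.2 \in f p.1))).
  rewrite -(pair_big_dep _ (fun i j => j \in f i) (fun _ _ => 1)) /=.
  by apply: eq_bigr => i _; rewrite sum1_card.
by move=> p; rewrite inE.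
Qed.

Lemma card_swap (T1 T2 : finType) (X : {set T1 * T2}) :
  #|[set (p.2, p.1) | p in X]| = #|X|.
Proof. by apply: card_imset => -[? ?] [? ?] /= [-> ->]. Qed.

Lemma card_diag (T : finType) (B : {set T}) : #|[set (x, x) | x in B]| = #|B|.
Proof. by apply: card_imset => ? ? []. Qed.

Lemma turan_step_arith N Nw w r a :
  N <= Nw + 2 * r * w -> a * Nw <= a.-1 * (w * w) -> Nw <= w * w ->
  (a = 0 -> w = 0) -> a.+1 * N <= a * ((w + r) * (w + r)).
Proof.
move=> hN hNw hw0 a0w; case: a hNw a0w => [|b] hNw a0w.
  by rewrite a0w // in hN hw0 *; lia.
have amgm : b.+1 * r * w * 2 <= b.+1 * r * (b.+1 * r) + w * w.
  by case: (leqP (b.+1 * r) w); nia.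
rewrite -(leq_pmul2l (ltn0Sn b)); nia.
Qed.

Lemma ltr_nat_div (R : numFieldType) (m n d : nat) : 0 < d ->
  ((m%:R : R) < n%:R / d%:R)%R = (m * d < n).
Proof. by move=> d_gt0; rewrite ltr_pdivlMr ?ltr0n // -natrM ltr_nat. Qed.

Lemma ltr_div_nat (R : numFieldType) (m n d : nat) : 0 < d ->
  ((n%:R : R) / d%:R < m%:R)%R = (n < m * d).
Proof. by move=> d_gt0; rewrite ltr_pdivrMr ?ltr0n // -natrM ltr_nat. Qed.

Section Graph.
Variables (T : finType) (e : rel T).
Hypotheses (esym : symmetric e) (eirr : irreflexive e).
Implicit Types (B H I S U W : {set T}).

Definition edge_pairs (B : {set T}) : {set T * T} :=
  [set p | [&& p.1 \in B, p.2 \in B & e p.1 p.2]].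

Definition nonedge_pairs (B : {set T}) : {set T * T} :=
  [set p | [&& p.1 \in B, p.2 \in B, p.1 != p.2 & ~~ e p.1 p.2]].

Definition nbhd (B : {set T}) x := [set y in B | e x y].

Definition non_nbhd (B : {set T}) x := [set y in B | (y != x) && ~~ e x y].

Lemma card_nonedge_pairs_le B : #|nonedge_pairs B| <= #|B| * #|B|.
Proof.
rewrite -cardsX; apply/subset_leq_card/subsetP => -[x y].
by rewrite !inE /= => /and4P [-> -> _ _].
Qed.

Lemma card_edge_pairs_le B : #|edge_pairs B| + #|B| <= #|B| * #|B|.
Proof.
have disj : [disjoint edge_pairs B & [set (x, x) | x in B]].
  rewrite -setI_eq0; apply/eqP/setP => -[x y]; rewrite !inE /=.
  apply/negP => /andP [/and3P [_ _ exy] /imsetP [z _ [xz yz]]].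
  by rewrite xz yz eirr in exy.
have := leq_card_setU (edge_pairs B) [set (x, x) | x in B].
rewrite disj -cardsX -(card_diag B) => -[_ /eqP <-].
apply/subset_leq_card/subsetP => -[x y]; rewrite !inE /=.
by case/orP => [/and3P [-> -> _] | /imsetP [z zB [-> ->]]]; rewrite ?zB.
Qed.

Lemma card_all_pairs_le :
  #|T| * #|T| <= #|edge_pairs setT| + #|nonedge_pairs setT| + #|T|.
Proof.
have -> : #|T| * #|T| = #|[set: T * T]| by rewrite cardsT card_prod.
rewrite -[X in _ + X](cardsT T) -(card_diag [set: T]).
have cover : [set: T * T] \subset
    edge_pairs setT :|: nonedge_pairs setT :|: [set (x, x) | x in [set: T]].
  apply/subsetP => -[x y] _; rewrite !in_setU.
  have [->|nxy] := eqVneq x y; first by rewrite imset_f ?orbT ?inE.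
  by rewrite !inE /= nxy; case: (e x y).
apply: (leq_trans (subset_leq_card cover)).
apply: (leq_trans (leq_card_setU _ _).1); rewrite leq_add2r.
exact: (leq_card_setU _ _).1.
Qed.

Lemma card_edge_pairs_setD1 H v :
  #|edge_pairs H| <= #|edge_pairs (H :\ v)| + 2 * #|nbhd H v|.
Proof.
set N := nbhd H v.
have cover : edge_pairs H \subset
    edge_pairs (H :\ v) :|: [set (v, u) | u in N] :|: [set (u, v) | u in N].
  apply/subsetP => -[x y]; rewrite inE /= => /and3P [xH yH exy].
  rewrite !in_setU.
  have [xv|nxv] := eqVneq x v.
    by rewrite -xv imset_f ?orbT // inE yH -xv.
  have [yv|nyv] := eqVneq y v.
    by rewrite -yv imset_f ?orbT // inE xH -yv esym.
  by rewrite inE /= !in_setD1 nxv nyv xH yH exy.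
have cardN (f : T -> T * T) : injective f -> #|f @: N| = #|N|.
  by move=> /card_imset ->.
apply: (leq_trans (subset_leq_card cover)).
apply: (leq_trans (leq_card_setU _ _).1).
rewrite cardN; last by move=> ? ? [].
rewrite mul2n -addnn addnA leq_add2r.
by apply: (leq_trans (leq_card_setU _ _).1); rewrite cardN // => ? ? [].
Qed.

Lemma independent_set1 x : independent e [set x].
Proof.
apply/'forall_implyP => y /set1P ->.
by apply/'forall_implyP => z /set1P ->; rewrite eirr.
Qed.

Lemma independent_setU1 B v I :
  I \subset non_nbhd B v -> independent e I -> independent e (v |: I).
Proof.
move=> I_nonadj indI; have nonadj_v y : y \in I -> ~~ e v y.
  by move=> /(subsetP I_nonadj); rewrite inE => /and3P [].
apply/forallP => x; apply/implyP; rewrite in_setU1 => xI.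
apply/forallP => y; apply/implyP; rewrite in_setU1 => yI.
case/orP: xI => [/eqP-> | xI]; case/orP: yI => [/eqP-> | yI].
- by rewrite eirr.
- exact: nonadj_v.
- by rewrite esym nonadj_v.
- by move/forallP/(_ x): indI; rewrite xI => /forallP/(_ y); rewrite yI.
Qed.

Lemma card_nonedge_pairs_split B W : W \subset B ->
  #|nonedge_pairs B| <=
    #|nonedge_pairs W| + 2 * \sum_(x in B :\: W) #|non_nbhd B x|.
Proof.
move=> WB.
set X := [set p : T * T | (p.1 \in B :\: W) && (p.2 \in non_nbhd B p.1)].
have cover : nonedge_pairs B \subset
    nonedge_pairs W :|: X :|: [set (p.2, p.1) | p in X].
  apply/subsetP => -[x y]; rewrite inE /= => /and4P [xB yB nxy nexy].
  have xy_nonadj : y \in non_nbhd B x by rewrite inE yB eq_sym nxy nexy.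
  have yx_nonadj : x \in non_nbhd B y by rewrite inE xB nxy esym nexy.
  rewrite !in_setU [_ \in X]inE /= in_setD xB xy_nonadj !andbT.
  case xW: (x \in W); case yW: (y \in W); rewrite ?orbT //=.
    by rewrite inE /= xW yW nxy nexy.
  apply/orP; right; apply/imsetP; exists (y, x) => //.
  by rewrite inE /= in_setD yW yB.
rewrite -card_dep_pairs -/X mul2n -addnn addnA -{2}(card_swap X).
apply: (leq_trans (subset_leq_card cover)).
apply: (leq_trans (leq_card_setU _ _).1); rewrite leq_add2r.
exact: (leq_card_setU _ _).1.
Qed.

Lemma turan_nonedge_pairs a B :
  (forall I, I \subset B -> independent e I -> #|I| <= a) ->
  a * #|nonedge_pairs B| <= a.-1 * (#|B| * #|B|).
Proof.
elim: a B => [|a IHa] B indB; first by rewrite mul0n.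
have [->|[x0 x0B]] := set_0Vmem B.
  by have := card_nonedge_pairs_le set0; rewrite cards0 leqn0 => /eqP ->.
have [v vB maxv] := arg_maxnP (fun x => #|non_nbhd B x|) x0B.
set W := non_nbhd B v.
have WB : W \subset B by apply/subsetP => y; rewrite inE => /andP [].
have indW I : I \subset W -> independent e I -> #|I| <= a.
  move=> IW indI; have vI : v \notin I.
    by apply/negP => /(subsetP IW); rewrite !inE eqxx andbF.
  have := indB (v |: I); rewrite cardsU1 vI add1n ltnS; apply.
    by rewrite subUset sub1set (subset_trans IW WB) andbT.
  exact: independent_setU1 IW indI.
have sum_le : \sum_(x in B :\: W) #|non_nbhd B x| <= (#|B| - #|W|) * #|W|.
  have cardBW : #|B :\: W| = #|B| - #|W| by rewrite cardsD (setIidPr WB).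
  rewrite -cardBW -sum_nat_const.
  by apply: leq_sum => x /setDP [xB _]; apply: maxv.
have a0W : a = 0 -> #|W| = 0.
  move=> a0; have [->|[w wW]] := set_0Vmem W; first by rewrite cards0.
  have := indW [set w] _ (independent_set1 w).
  by rewrite cards1 sub1set wW a0 => /(_ isT).
have splitB :
    #|nonedge_pairs B| <= #|nonedge_pairs W| + 2 * (#|B| - #|W|) * #|W|.
  rewrite -mulnA; apply: (leq_trans (card_nonedge_pairs_split WB)).
  by rewrite leq_add2l leq_mul2l sum_le orbT.
have := turan_step_arith splitB (IHa W indW) (card_nonedge_pairs_le W) a0W.
by rewrite subnKC ?subset_leq_card.
Qed.

Lemma turan_edge_pairs a : 0 < a ->
  (forall I, independent e I -> #|I| <= a) ->
  #|T| * #|T| <= a * #|edge_pairs setT| + a * #|T|.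
Proof.
move=> a_gt0 indT.
have := turan_nonedge_pairs (B := setT) (fun I _ => indT I).
have := leq_mul (leqnn a) card_all_pairs_le.
rewrite cardsT; nia.
Qed.

Lemma card_independent_le_alpha I : independent e I -> #|I| <= alpha e.
Proof. exact: (leq_bigmax_cond (F := fun I : {set T} => #|I|)). Qed.

Lemma alpha_gt0 : 0 < #|T| -> 0 < alpha e.
Proof.
case/card_gt0P => x _.
by have := card_independent_le_alpha (independent_set1 x); rewrite cards1.
Qed.

Lemma k_connected_on_set1 x (k : rat) : (k < 1)%R -> k_connected_on e [set x] k.
Proof.
move=> k_lt1; split; first by rewrite cards1.
by move=> S _ _ y z; rewrite !inE => /andP [_ /eqP ->] /andP [_ /eqP ->].
Qed.

(* Pairs are ordered: the second condition says that G[B] has more than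
   2c (|B| - c) edges. *)
Definition dense c B :=
  (2 * c <= #|B|) && (4 * c * (#|B| - c) < #|edge_pairs B|).

Definition component B x :=
  [set y in B | connect [rel u v | [&& e u v, u \in B & v \in B]] x y].

Lemma component_closed B x y z :
  y \in component B x -> z \in B -> e y z -> z \in component B x.
Proof.
rewrite !inE => /andP [yB xy] zB eyz; rewrite zB (connect_trans xy) //.
by apply: connect1; rewrite /= eyz yB zB.
Qed.

Lemma edge_pairs_separated H S U :
  (forall y z, y \in U -> z \in H :\: S -> e y z -> z \in U) ->
  edge_pairs H \subset edge_pairs (U :|: S) :|: edge_pairs (H :\: U).
Proof.
move=> closedU; apply/subsetP => -[y z]; rewrite inE /= => /and3P [yH zH eyz].
rewrite !inE /= yH zH eyz !andbT.
have [yU|yU] := boolP (y \in U); have [zU|zU] := boolP (z \in U);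
  rewrite /= ?orbT ?orbF ?andbT //=.
- by apply: contraR zU => zS; apply: closedU yU _ eyz; rewrite in_setD zS zH.
- apply: contraR yU => yS; rewrite esym in eyz.
  by apply: closedU zU _ eyz; rewrite in_setD yS yH.
Qed.

Lemma dense_card_gt c B : dense c B -> 2 * c < #|B|.
Proof.
case/andP => le2c denseB; rewrite ltn_neqAle le2c andbT; apply/eqP => cardB.
have := card_edge_pairs_le B; rewrite -cardB in denseB *.
nia.
Qed.

Section MinimalDense.
Variables (c : nat) (H : {set T}).
Hypothesis denseH : dense c H.
Hypothesis minH : forall B, B \subset H -> #|B| < #|H| -> ~~ dense c B.

Lemma min_dense_sparse B : B \subset H -> #|B| < #|H| -> 2 * c <= #|B| ->
  #|edge_pairs B| <= 4 * c * (#|B| - c).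
Proof.
by move=> BH ltBH le2c; have := minH BH ltBH; rewrite /dense le2c ltnNge negbK.
Qed.

Lemma min_dense_degree v : v \in H -> 2 * c < #|nbhd H v|.
Proof.
move=> vH; have ltH := dense_card_gt denseH.
have cardHv : #|H :\ v| = #|H|.-1 by rewrite (cardsD1 v H) vH.
have sparseHv : #|edge_pairs (H :\ v)| <= 4 * c * (#|H|.-1 - c).
  by rewrite -cardHv; apply: min_dense_sparse; rewrite ?subD1set // cardHv; lia.
have := card_edge_pairs_setD1 H v; case/andP: denseH => _.
move: ltH sparseHv; clear; nia.
Qed.

Lemma min_dense_closed_nbhd v : v \in H -> 2 * c.+1 <= #|v |: nbhd H v|.
Proof.
by move=> /min_dense_degree; rewrite cardsU1 inE eirr andbF add1n mulnS.
Qed.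

Lemma min_dense_card : 2 * c.+1 <= #|H|.
Proof.
have /card_gt0P [v vH] : 0 < #|H| by have := dense_card_gt denseH; lia.
apply: (leq_trans (min_dense_closed_nbhd vH)); apply: subset_leq_card.
by rewrite subUset sub1set vH; apply/subsetP => y; rewrite inE => /andP [].
Qed.

Lemma min_dense_sparse_part B x y : x \in H -> y \in H ->
  x |: nbhd H x \subset B -> B \subset H :\ y ->
  #|edge_pairs B| <= 4 * c * (#|B| - c).
Proof.
move=> xH yH NxB BHy; apply: min_dense_sparse.
- by apply: subset_trans BHy (subD1set H y).
- by apply: leq_ltn_trans (subset_leq_card BHy) _; rewrite (cardsD1 y H) yH.
- have := leq_trans (min_dense_closed_nbhd xH) (subset_leq_card NxB); lia.
Qed.

(* The component U of x in H - S, together with S, and the rest H - U cover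
   all edges of H; both are proper parts of H and their sizes add up to at
   most |H| + c. *)
Lemma min_dense_connected S :
  S \subset H -> #|S| <= c -> connected_on e (H :\: S).
Proof.
move=> SH cardS x y xHS yHS; apply/idPn => nxy.
have [xH yH] : x \in H /\ y \in H by move: xHS yHS => /setDP [? _] /setDP [? _].
set U := component (H :\: S) x.
have xU : x \in U by rewrite inE xHS connect0.
have yU : y \notin U by rewrite inE yHS.
have UH : U \subset H by apply/subsetP => z /setIdP [/setDP []].
have closedU := @component_closed (H :\: S) x.
have NxU : x |: nbhd H x \subset U :|: S.
  apply/subsetP => z /setU1P [-> | /setIdP [zH exz]]; first by rewrite inE xU.
  rewrite in_setU orbC; have [//|zS /=] := boolP (z \in S).
  by apply: closedU exz; rewrite // inE zS zH.
have NyU : y |: nbhd H y \subset H :\: U.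
  apply/subsetP => z /setU1P [-> | /setIdP [zH eyz]].
    by rewrite inE yU yH.
  rewrite inE zH andbT; apply: contra yU => zU.
  by apply: closedU zU _ _; rewrite // esym.
have UShy : U :|: S \subset H :\ y.
  apply/subsetP => z; rewrite in_setD1 => /setUP [zU|zS].
    by rewrite (subsetP UH) // andbT; apply: contraNneq yU => <-.
  have yS : y \notin S by case/setDP: yHS.
  by rewrite (subsetP SH) // andbT; apply: contraNneq yS => <-.
have HUx : H :\: U \subset H :\ x.
  apply/subsetP => z /setDP [zH zU]; rewrite in_setD1 zH andbT.
  by apply: contraNneq zU => ->.
have sparseU := min_dense_sparse_part xH yH NxU UShy.
have sparseHU := min_dense_sparse_part yH xH NyU HUx.
have cardHU : #|H :\: U| = #|H| - #|U| by rewrite cardsD (setIidPr UH).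
have sizes : (#|U :|: S| - c) + (#|H :\: U| - c) <= #|H| - c.
  have := leq_trans (min_dense_closed_nbhd xH) (subset_leq_card NxU).
  have := leq_trans (min_dense_closed_nbhd yH) (subset_leq_card NyU).
  have := (leq_card_setU U S).1; have := subset_leq_card UH.
  move: cardHU cardS; clear; lia.
suff : #|edge_pairs H| <= 4 * c * (#|H| - c).
  by case/andP: denseH => _; rewrite ltnNge => /negP.
apply: leq_trans (subset_leq_card (edge_pairs_separated closedU)) _.
apply: leq_trans (leq_card_setU _ _).1 _.
apply: leq_trans (leq_add sparseU sparseHU) _.
by rewrite -mulnDr leq_mul2l sizes orbT.
Qed.
End MinimalDense.

Lemma mader_connected_subgraph c B : dense c B ->
  exists H, [/\ H \subset B, 2 * c.+1 <= #|H| &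
    forall S, S \subset H -> #|S| <= c -> connected_on e (H :\: S)].
Proof.
move=> denseB; pose P H := (H \subset B) && dense c H.
have [|H /andP [HB denseH] minH] := @arg_minnP _ B P (fun H => #|H|).
  by rewrite /P subxx denseB.
have minimal (X : {set T}) : X \subset H -> #|X| < #|H| -> ~~ dense c X.
  move=> XH ltXH; apply: contraL ltXH => denseX; rewrite -leqNgt.
  by apply: minH; rewrite /P (subset_trans XH HB) denseX.
exists H; split => //; [exact: min_dense_card | exact: min_dense_connected].
Qed.

End Graph.

Theorem mainTheorem5 (T : finType) (e : rel T) :
  simple_graph e -> 0 < #|T| ->
  exists A : {set T},
    k_connected_on e A ((#|T|%:R : rat) / (5 * alpha e)%:R)%R.
Proof.
move=> [esym eirr] n_gt0; have [x _] := card_gt0P n_gt0.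
have a_gt0 := alpha_gt0 eirr n_gt0.
have d_gt0 : 0 < 5 * alpha e by rewrite muln_gt0.
set n := #|T| in n_gt0 *; set a := alpha e in a_gt0 d_gt0 *.
have [n_le_a | a_lt_n] := leqP n a.
  exists [set x]; apply: k_connected_on_set1.
  by rewrite (ltr_div_nat _ 1) //; lia.
set c := n.-1 %/ (5 * a).
have c_max m : m * (5 * a) < n -> m <= c by move=> ?; rewrite leq_divRL //; lia.
have c_ceil : n <= c.+1 * (5 * a) by have := ltn_ceil n.-1 d_gt0; lia.
have c_floor : c * (5 * a) < n by have := leq_trunc_div n.-1 (5 * a); lia.
have denseT : dense e c setT.
  have a4c1 : a * (4 * c + 1) < n by have [->|c_gt0] := posnP c; nia.
  have := turan_edge_pairs esym eirr a_gt0 (@card_independent_le_alpha _ e).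
  rewrite /dense cardsT -/n -/a; nia.
have [H [_ cardH connH]] := mader_connected_subgraph esym eirr denseT.
exists H; split.
  rewrite ltr_div_nat //; apply: leq_ltn_trans c_ceil _.
  by rewrite ltn_pmul2r //; lia.
by move=> S SH; rewrite ltr_nat_div // => /c_max; apply: connH.
Qed.
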